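(* Let $X$ be a separable absolutely strongly star-Menger space. If $Y$ is a closed and discrete subset of $X$, then $|Y|<\mathfrak{d}$.
   Context: All spaces are regular. $St(A,\mathcal{U})=\bigcup\{U\in\mathcal{U}:U\cap A\neq\emptyset\}$. $\mathfrak{d}$ is the dominating number. $X$ is absolutely strongly star-Menger if for each sequence $(\mathcal{U}_n:n\in\omega)$ of open covers and each dense subset $D$ of $X$ there are finite sets $F_n\subseteq D$ ($n\in\omega$) such that $\{St(F_n,\mathcal{U}_n):n\in\omega\}$ covers $X$. *)

From HB Require Import structures.
From mathcomp Require Import all_boot all_order.
From mathcomp Require Import all_classical all_reals all_analysis.
Set Implicit Arguments. Unset Strict Implicit. Unset Printing Implicit Defensive.
Local Open Scope classical_set_scope.
Local Open Scope card_scope.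

Definition star (T : Type) (A : set T) (U : set (set T)) : set T :=
  \bigcup_(V in [set V | U V /\ V `&` A !=set0]) V.

Definition open_cover (T : topologicalType) (U : set (set T)) : Prop :=
  (forall V, U V -> open V) /\ \bigcup_(V in U) V = setT.

Definition separable (T : topologicalType) : Prop :=
  exists D : set T, countable D /\ dense D.

Definition abs_strongly_star_Menger (T : topologicalType) : Prop :=
  forall (U : nat -> set (set T)) (D : set T),
    (forall n, open_cover (U n)) -> dense D ->
    exists F : nat -> set T,
      (forall n, finite_set (F n) /\ F n `<=` D) /\
      \bigcup_n star (F n) (U n) = setT.

Definition discrete_subset (T : topologicalType) (Y : set T) : Prop :=
  forall y, Y y -> exists V : set T, open V /\ V y /\ V `&` Y = [set y].

Definition eventually_le (g f : nat -> nat) : Prop :=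
  exists N, forall n, (N <= n)%N -> (g n <= f n)%N.

Definition dominating (F : set (nat -> nat)) : Prop :=
  forall g, exists2 f, F f & eventually_le g f.

(* |Y| < d, where d = min{|F| : F dominating}: |Y| < |F| for every dominating F *)
Definition card_lt_dominating (T : Type) (Y : set T) : Prop :=
  forall F : set (nat -> nat), dominating F -> Y #<= F /\ ~ (F #<= Y).

(* The heart of the proof (no_injection_dominating) shows that F does not
   inject into Y.  Given an injection phi, label each point phi f of Y by f.
   With e a dense sequence, the k-th cover consists of X \ Y and, for each
   y in Y, an isolating neighbourhood of y from which the first
   (label of y)(k) + 1 terms of e other than y are removed.  Selections of
   finite subsets of range e for all shifts of these covers, together with
   the labels of the terms of e, yield a function G; any f in F dominating G
   gives a point phi f that no selected star can cover.

   Hence not F #<= Y, and comparability of cardinals (card_le_total, proved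
   by Zorn's lemma on partial bijections) gives Y #<= F. *)

From HB Require Import structures.
From mathcomp Require Import all_boot all_order.
From mathcomp Require Import all_classical all_reals all_analysis.
From mathcomp Require Import zify.
Set Implicit Arguments. Unset Strict Implicit. Unset Printing Implicit Defensive.
Local Open Scope classical_set_scope.
Local Open Scope card_scope.

Section injections.
Variables (T U : Type) (A : set T) (B : set U).

Lemma card_le_of_fun (f : T -> U) :
  (forall a, A a -> B (f a)) -> {in A &, injective f} -> A #<= B.
Proof.
move=> fAB finj; have [g] : $|{injfun A >-> B}| by apply/injfunPex; exists f.
exact: inj_card_le.
Qed.

Lemma card_le_inj_fun (a0 : T) : A a0 -> A #<= B ->
  exists phi : T -> U, (forall a, A a -> B (phi a)) /\ {in A &, injective phi}.
Proof.
move=> Aa0 /card_leP [h].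
pose phi a := if pselect (A a) is left Aa then val (h (SigSub (mem_set Aa)))
              else val (h (SigSub (mem_set Aa0))).
exists phi; split=> [a Aa|a a' /set_mem Aa /set_mem Aa'].
  by rewrite /phi; case: pselect => // Aa'; exact: set_mem (valP (h _)).
rewrite /phi; case: pselect => // p; case: pselect => // p' /val_inj e.
by have /(congr1 val) := @inj _ _ _ h _ _ (in_setT _) (in_setT _) e.
Qed.

Lemma card_le_of_rel (M : set (T * U)) :
  (forall p, M p -> B p.2) ->
  (forall a a' b, M (a, b) -> M (a', b) -> a = a') ->
  (forall a, A a -> exists b, M (a, b)) -> A #<= B.
Proof.
move=> MB Minj Mtot.
have [->|/set0P[a0 /Mtot[b0 _]]] := eqVneq A set0; first exact: card_ge0.
have /choice[h hM] : forall a, exists b, A a -> M (a, b).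
  by move=> a; have [/Mtot[b Mab]|nAa] := pselect (A a); [exists b | exists b0].
apply: (card_le_of_fun (f := h)) => [a /hM /MB //|a a' /set_mem Aa /set_mem Aa' ha].
by apply: (Minj _ _ (h a)); [exact: hM | rewrite ha; exact: hM].
Qed.

End injections.

Section cardinal_comparability.
Variables (T U : Type) (A : set T) (B : set U).

Definition partial_bij (M : set (T * U)) : Prop :=
  [/\ forall p, M p -> A p.1 /\ B p.2,
      forall a b b', M (a, b) -> M (a, b') -> b = b' &
      forall a a' b, M (a, b) -> M (a', b) -> a = a'].

Lemma partial_bij_chain (C : set (set (T * U))) :
  C `<=` partial_bij -> total_on C subset -> partial_bij (\bigcup_(M in C) M).
Proof.
move=> Cpb tot; split.
- by move=> p [M CM Mp]; have [+ _ _] := Cpb M CM; apply.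
- move=> a b b' [M1 C1 h1] [M2 C2 h2].
  have [[_ + _] [_ + _]] := (Cpb M1 C1, Cpb M2 C2).
  case: (tot M1 M2 C1 C2) => sub F1 F2.
    exact: F2 (sub _ h1) h2.
  exact: F1 h1 (sub _ h2).
- move=> a a' b [M1 C1 h1] [M2 C2 h2].
  have [[_ _ +] [_ _ +]] := (Cpb M1 C1, Cpb M2 C2).
  case: (tot M1 M2 C1 C2) => sub F1 F2.
    exact: F2 (sub _ h1) h2.
  exact: F1 h1 (sub _ h2).
Qed.

Lemma partial_bij_add (M : set (T * U)) a0 b0 : partial_bij M -> A a0 -> B b0 ->
  (forall b, ~ M (a0, b)) -> (forall a, ~ M (a, b0)) ->
  partial_bij (M `|` [set (a0, b0)]).
Proof.
move=> [MAB Mfun Minj] Aa0 Bb0 na0 nb0; split.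
- by move=> p [/MAB //|->].
- move=> a b b' [h1|[ea eb]] [h2|[ea' eb']]; subst.
  + exact: Mfun h1 h2.
  + by case: (na0 b).
  + by case: (na0 b').
  + by [].
- move=> a a' b [h1|[ea eb]] [h2|[ea' eb']]; subst.
  + exact: Minj h1 h2.
  + by case: (nb0 a).
  + by case: (nb0 a').
  + by [].
Qed.

Lemma card_le_total : A #<= B \/ B #<= A.
Proof.
have [M [[MAB Mfun Minj] Mmax]] := Zorn_bigcup partial_bij_chain.
have [domA|/existsNP[a0 /not_implyP[Aa0 /forallNP na0]]] :=
  pselect (forall a, A a -> exists b, M (a, b)).
  by left; apply: (card_le_of_rel (M := M)) => // p /MAB[].
have [ranB|/existsNP[b0 /not_implyP[Bb0 /forallNP nb0]]] :=
  pselect (forall b, B b -> exists a, M (a, b)).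
  right; apply: (card_le_of_rel (M := [set p | M (p.2, p.1)])).
  - by move=> p /MAB[].
  - by move=> b b' a Mab Mab'; exact: Mfun Mab Mab'.
  - exact: ranB.
exfalso; apply: (Mmax (M `|` [set (a0, b0)])).
  by split=> [p Mp|/(_ (a0, b0) (or_intror erefl))]; [left|exact: na0].
exact: partial_bij_add.
Qed.

End cardinal_comparability.

Lemma finite_nat_bounded (S : set nat) : finite_set S -> exists m, S `<=` `I_m.
Proof.
move=> finS; exists (\max_(i <- finmap.enum_fset (fset_set S)) i).+1.
move=> i Si /=; rewrite ltnS.
by apply: (leq_bigmax_seq (F := id)) => //; rewrite in_fset_set // mem_set.
Qed.

Lemma finite_sub_range (T : Type) (e : nat -> T) (A : set T) :
  finite_set A -> A `<=` range e -> exists m, A `<=` e @` `I_m.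
Proof.
move=> finA Ae.
have /choice[idx idxP] : forall x, exists i, A x -> e i = x.
  move=> x; have [Ax|nAx] := pselect (A x); last by exists 0%N.
  by have [i _ <-] := Ae x Ax; exists i.
have [m idx_m] := finite_nat_bounded (finite_image idx finA).
by exists m => x Ax; exists (idx x); [apply: idx_m; exists x | exact: idxP].
Qed.

(* A single function beats g along the anti-diagonals and h on the columns
   below the diagonal; this is the function we ask the dominating family to
   dominate. *)
Lemma diagonal_majorant (g h : nat -> nat -> nat) : exists G : nat -> nat,
  forall m j, (j <= m)%N -> (g j (m - j) < G m)%N /\ (h j m < G m)%N.
Proof.
exists (fun m => (\sum_(j < m.+1) (g j (m - j) + h j m)).+1) => m j jm.
have jm1 : (j < m.+1)%N by rewrite ltnS.
have : (g j (m - j) + h j m <= \sum_(k < m.+1) (g k (m - k) + h k m))%N.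
  by rewrite (bigD1 (Ordinal jm1)) //= leq_addr.
lia.
Qed.

Lemma separable_seq (T : topologicalType) (x0 : T) :
  separable T -> exists e : nat -> T, dense (range e).
Proof.
move=> [D [cD dD]]; have /pfcard_geP[D0|/surjfunPex[e De]] := cD.
  by have [|z [_]] := dD setT _ openT; [exists x0 | rewrite D0].
by exists e; rewrite -De.
Qed.

Lemma discrete_isolating (T : topologicalType) (Y : set T) : discrete_subset Y ->
  exists V : T -> set T, forall y, Y y -> [/\ open (V y), V y y & V y `&` Y = [set y]].
Proof.
move=> discY; have /choice[V VP] : forall y, exists V : set T,
    Y y -> [/\ open V, V y & V `&` Y = [set y]].
  move=> y; have [/discY[W [oW [Wy WY]]]|nYy] := pselect (Y y).
    by exists W.
  by exists setT => /nYy.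
by exists V.
Qed.

Section labelled_covers.
Variables (X : topologicalType) (Y : set X) (V : X -> set X) (e : nat -> X).
Hypothesis accX : accessible_space X.
Hypothesis closedY : closed Y.
Hypothesis isolV : forall y, Y y -> [/\ open (V y), V y y & V y `&` Y = [set y]].

Definition avoid (y : X) (m : nat) : set X :=
  ~` [set e i | i in [set i | (i < m)%N /\ e i <> y]].

Lemma open_avoid y m : open (avoid y m).
Proof.
rewrite openC; apply: (accessible_finite_set_closed.1 accX); apply: finite_image.
by apply: sub_finite_set (finite_II m) => i [].
Qed.

Definition label_cover (psi : X -> nat -> nat) (k : nat) : set (set X) :=
  [set ~` Y] `|` [set V y `&` avoid y (psi y k).+1 | y in Y].

Lemma label_cover_open psi k : open_cover (label_cover psi k).
Proof.
split=> [W [->|[y Yy <-]]|]; first exact: closed_openC.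
  by have [oV _ _] := isolV Yy; apply: openI => //; exact: open_avoid.
apply/seteqP; split=> // x _; have [Yx|nYx] := pselect (Y x); last first.
  by exists (~` Y); [left|].
exists (V x `&` avoid x (psi x k).+1); first by right; exists x.
by have [_ Vx _] := isolV Yx; split=> // -[i [_ eix] /eix].
Qed.

Lemma label_cover_index psi k W y i : label_cover psi k W -> Y y -> W y ->
  W (e i) -> e i <> y -> (psi y k < i)%N.
Proof.
move=> [->|[y' Yy' <-]] Yy Wy; first by case: Wy.
have yy' : y = y'.
  have [_ _ VY] := isolV Yy'; have : (V y' `&` Y) y by split=> //; case: Wy.
  by rewrite VY.
subst y' => -[_ av] eiy; rewrite ltnNge; apply/negP => ile; apply: av.
by exists i.
Qed.

End labelled_covers.

(* Label y = phi f in Y by f, choose star-Menger selections Fs j for the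
   covers shifted by j, and let f in F dominate, from N on, a majorant of
   the indices used by the selections along the diagonal and of the labels
   of the terms of e.  The point phi f is then covered by a star of
   Fs N n in the (n + N)-th cover, which is impossible. *)
Lemma no_injection_dominating (X : topologicalType) (Y : set X)
    (F : set (nat -> nat)) :
  accessible_space X -> separable X -> abs_strongly_star_Menger X ->
  closed Y -> discrete_subset Y -> dominating F -> ~ (F #<= Y).
Proof.
move=> accX sepX assmX closedY discY domF FY.
have [f0 Ff0 _] := domF (fun=> 0%N).
have [phi [phiY phiI]] := card_le_inj_fun Ff0 FY.
have [e dense_e] := separable_seq (phi f0) sepX.
have [V isolV] := discrete_isolating discY.
pose psi := pinv_ (fun=> f0) F phi.
have psiK f : F f -> psi (phi f) = f by move=> Ff; apply: pinvKV; rewrite ?inE.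
pose U := label_cover Y V e psi.
have /choice[Fs FsP] : forall j, exists Fj : nat -> set X,
    (forall n, finite_set (Fj n) /\ Fj n `<=` range e) /\
    \bigcup_n star (Fj n) (U (n + j)%N) = setT.
  by move=> j; apply: assmX => // n; exact: label_cover_open.
have /choice[g gP] : forall j, exists gj : nat -> nat,
    forall n, Fs j n `<=` e @` `I_(gj n).
  move=> j; suff /choice[gj gjP] : forall n, exists m, Fs j n `<=` e @` `I_m.
    by exists gj.
  by move=> n; have [finF subF] := (FsP j).1 n; exact: finite_sub_range.
have [G GP] := diagonal_majorant g (fun i => psi (e i)).
have [f Ff [N fG]] := domF G.
have ney i : e i <> phi f.
  move=> eiy; have [_] := GP (N + i)%N i (leq_addl _ _).
  by have := fG (N + i)%N (leq_addr _ _); rewrite eiy psiK //; lia.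
have : (\bigcup_n star (Fs N n) (U (n + N)%N)) (phi f) by rewrite (FsP N).2.
move=> [n _ [W [UW [z [Wz Fz]]] Wy]].
have [i /= ig eiz] := gP N n z Fz; rewrite -eiz in Wz.
have := label_cover_index isolV UW (phiY f Ff) Wy Wz (ney i).
have [+ _] := GP (n + N)%N N (leq_addl _ _); rewrite addnK.
by have := fG (n + N)%N (leq_addl _ _); rewrite psiK //; lia.
Qed.

Theorem mainTheorem9 (X : topologicalType) (Y : set X) :
  regular_space X -> accessible_space X ->
  separable X -> abs_strongly_star_Menger X ->
  closed Y -> discrete_subset Y ->
  card_lt_dominating Y.
Proof.
move=> _ accX sepX assmX closedY discY F domF.
have notFY := no_injection_dominating accX sepX assmX closedY discY domF.
by split=> //; have [] := card_le_total Y F.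
Qed.
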